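(* Let $\sigma$ be an ergodic measure-preserving transformation of $(\Omega,\mathbb P)$ and $A\colon\Omega\to M_{d\times d}(\mathbb R)$ measurable with $\log^+\|A(\omega)\|$ integrable. There exists $C>0$ such that for all $\eta_0>0$ there exists $\epsilon_0>0$ such that for all $0<\epsilon<\epsilon_0$ there is a measurable $G\subseteq\Omega$ with $\mathbb P(G)\ge1-\eta_0$ such that for all $\omega\in G$ and all sequences $(\Delta_n)\in U^{\mathbb Z}$, $$\big\|(A(\sigma^{N-1}\omega)+\epsilon\Delta_{N-1})\cdots(A(\omega)+\epsilon\Delta_0)-A(\sigma^{N-1}\omega)\cdots A(\omega)\big\|\le1,$$ where $N=\lfloor C|\log\epsilon|\rfloor$.
   Context: Norms are operator norms; $U=\{M\in M_{d\times d}(\mathbb R):\|M\|\le1\}$. *)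

From HB Require Import structures.
From mathcomp Require Import all_boot all_order all_algebra.
From mathcomp Require Import all_classical all_reals all_analysis.
Set Implicit Arguments. Unset Strict Implicit. Unset Printing Implicit Defensive.
Import Order.TTheory GRing.Theory Num.Theory.
Local Open Scope classical_set_scope.
Local Open Scope ring_scope.

Definition vnorm (R : realType) (d : nat) (v : 'cV[R]_d) : R :=
  Num.sqrt (\sum_(i < d) v i 0 ^+ 2).

Definition opnorm (R : realType) (d : nat) (M : 'M[R]_d) : R :=
  sup [set vnorm (M *m v) | v in [set v : 'cV[R]_d | vnorm v <= 1]].

Definition logplus (R : realType) (x : R) : R := Num.max 0 (ln x).

Fixpoint lprod (R : realType) (d : nat) (B : nat -> 'M[R]_d) (n : nat) : 'M[R]_d :=
  match n with
  | 0 => 1%:M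
  | n'.+1 => B n' *m lprod B n'
  end.

Definition measure_preserving (R : realType) (dsp : measure_display)
  (T : measurableType dsp) (P : probability T R) (sigma : T -> T) : Prop :=
  measurable_fun setT sigma /\
  forall B : set T, measurable B -> P (sigma @^-1` B) = P B.

Definition ergodic (R : realType) (dsp : measure_display)
  (T : measurableType dsp) (P : probability T R) (sigma : T -> T) : Prop :=
  forall B : set T, measurable B -> sigma @^-1` B = B ->
    P B = 0%E \/ P B = 1%E.

(* Write B k for A (sigma^k w) and E k for the perturbations, with opnorm (E k) <= eps.
   Induction on N gives
     opnorm (prod (B + E) - prod B) <= N eps prod (opnorm B k + 1)
                                   <= N eps exp (sum_(k < N) (log^+ opnorm B k + 1)).
   The only ergodic input is an upper bound in probability on the Birkhoff sums S_N of
   f = log^+ opnorm A + 1: for L > int f, S_N <= L N outside a set of measure eta once N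
   is large.  With C = 1/(2L) and N <= C |ln eps| the exponential is at most eps^(-1/2),
   so the difference is at most N sqrt eps <= 1.
   The bound on S_N avoids Birkhoff's theorem.  By Markov's inequality and ergodicity,
   almost every point has liminf S_n / n < L.  Cutting the orbit into blocks of length
   at most K on which the average of f is below L, except at the points where no such
   block starts, bounds S_N by L (N + K) plus the Birkhoff sum of f restricted to those
   exceptional points; the integral of the latter tends to 0 with K by dominated
   convergence, and Markov's inequality concludes. *)

From HB Require Import structures.
From mathcomp Require Import all_boot all_order all_algebra.
From mathcomp Require Import all_classical all_reals all_analysis.
From mathcomp Require Import ring lra zify measurable_realfun.
Set Implicit Arguments. Unset Strict Implicit. Unset Printing Implicit Defensive.
Import Order.TTheory GRing.Theory Num.Theory.
Local Open Scope classical_set_scope.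
Local Open Scope ring_scope.

Lemma cauchy_schwarz (R : realFieldType) (n : nat) (a b : 'I_n -> R) :
  (\sum_i a i * b i) ^+ 2 <= (\sum_i a i ^+ 2) * (\sum_i b i ^+ 2).
Proof.
have -> : (\sum_i a i ^+ 2) * (\sum_i b i ^+ 2) = \sum_i \sum_j a i ^+ 2 * b j ^+ 2.
  by rewrite mulr_suml; apply: eq_bigr => i _; rewrite mulr_sumr.
have -> : (\sum_i a i * b i) ^+ 2 = \sum_i \sum_j a i * b i * (a j * b j).
  by rewrite expr2 mulr_suml; apply: eq_bigr => i _; rewrite mulr_sumr.
have sym : \sum_i \sum_j a j ^+ 2 * b i ^+ 2 = \sum_i \sum_j a i ^+ 2 * b j ^+ 2.
  exact: exchange_big.
have : 0 <= \sum_i \sum_j (a i * b j - a j * b i) ^+ 2.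
  by apply: sumr_ge0 => i _; apply: sumr_ge0 => j _; exact: sqr_ge0.
have -> : \sum_i \sum_j (a i * b j - a j * b i) ^+ 2 =
  \sum_i \sum_j a i ^+ 2 * b j ^+ 2 - 2 * \sum_i \sum_j a i * b i * (a j * b j)
  + \sum_i \sum_j a j ^+ 2 * b i ^+ 2.
  rewrite mulr_sumr -sumrN -!big_split /=; apply: eq_bigr => i _.
  by rewrite mulr_sumr -sumrN -!big_split /=; apply: eq_bigr => j _; ring.
rewrite sym; lra.
Qed.

Section OperatorNorm.
Variables (R : realType) (d : nat).
Implicit Types (v w : 'cV[R]_d) (M : 'M[R]_d).

Lemma vnorm_ge0 v : 0 <= vnorm v.
Proof. exact: sqrtr_ge0. Qed.

Lemma vnorm_sqr v : vnorm v ^+ 2 = \sum_(i < d) v i 0 ^+ 2.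
Proof. by rewrite sqr_sqrtr // sumr_ge0 // => i _; exact: sqr_ge0. Qed.

Lemma vnorm0 : vnorm (0 : 'cV[R]_d) = 0.
Proof. by rewrite /vnorm big1 ?sqrtr0 // => i _; rewrite mxE expr2 mulr0. Qed.

Lemma vnormZ (c : R) v : vnorm (c *: v) = `|c| * vnorm v.
Proof.
rewrite /vnorm -sqrtr_sqr -sqrtrM ?sqr_ge0 //; congr Num.sqrt.
by rewrite mulr_sumr; apply: eq_bigr => i _; rewrite !mxE; ring.
Qed.

Lemma vnormD v w : vnorm (v + w) <= vnorm v + vnorm w.
Proof.
have cs : \sum_(i < d) v i 0 * w i 0 <= vnorm v * vnorm w.
  rewrite (le_trans (ler_norm _)) // -sqrtr_sqr -sqrtrM ?sumr_ge0 // => [|i _].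
    by apply: ler_wsqrtr; exact: (cauchy_schwarz (fun i => v i 0) (fun i => w i 0)).
  exact: sqr_ge0.
rewrite -ler_sqr ?nnegrE ?addr_ge0 ?vnorm_ge0 // sqrrD.
have -> : vnorm (v + w) ^+ 2 = vnorm v ^+ 2 + 2 * \sum_(i < d) v i 0 * w i 0
    + vnorm w ^+ 2.
  rewrite !vnorm_sqr mulr_sumr -!big_split /=.
  by apply: eq_bigr => i _; rewrite !mxE; ring.
lra.
Qed.

Lemma vnorm_coord_le v i : `|v i 0| <= vnorm v.
Proof.
rewrite -ler_sqr ?nnegrE ?vnorm_ge0 // real_normK ?num_real // vnorm_sqr.
by rewrite (bigD1 i) //= lerDl sumr_ge0 // => j _; exact: sqr_ge0.
Qed.

Lemma vnorm_eq0 v : vnorm v = 0 -> v = 0.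
Proof.
move=> v0; apply/matrixP => i j; rewrite (ord1 j) mxE; apply/normr0_eq0.
by apply/le_anti; rewrite normr_ge0 andbT -v0 vnorm_coord_le.
Qed.

Lemma vnorm_le_sum_norm v : vnorm v <= \sum_(i < d) `|v i 0|.
Proof.
rewrite -ler_sqr ?nnegrE ?vnorm_ge0 ?sumr_ge0 // vnorm_sqr expr2 mulr_suml.
apply: ler_sum => i _; rewrite mulr_sumr (bigD1 i) //= -normrM -expr2.
by rewrite ger0_norm ?sqr_ge0 // lerDl sumr_ge0 // => j _; exact: mulr_ge0.
Qed.

Let image_unit_ball M :=
  [set vnorm (M *m v) | v in [set v : 'cV[R]_d | vnorm v <= 1]].

Let image_unit_ball_ubound M : has_ubound (image_unit_ball M).
Proof.
exists (\sum_(i < d) \sum_(j < d) `|M i j|) => _ [v /= v1 <-].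
apply: (le_trans (vnorm_le_sum_norm _)); apply: ler_sum => i _; rewrite mxE.
apply: (le_trans (ler_norm_sum _ _ _)); apply: ler_sum => j _.
by rewrite normrM ler_piMr // (le_trans (vnorm_coord_le _ _)).
Qed.

Lemma opnorm_ub M v : vnorm v <= 1 -> vnorm (M *m v) <= opnorm M.
Proof. by move=> v1; apply: (ub_le_sup (image_unit_ball_ubound M)); exists v. Qed.

Lemma opnorm_ge0 M : 0 <= opnorm M.
Proof. by rewrite -vnorm0 -(mulmx0 _ M) opnorm_ub // vnorm0. Qed.

Lemma opnorm_le M c :
  (forall v, vnorm v <= 1 -> vnorm (M *m v) <= c) -> opnorm M <= c.
Proof.
move=> Mc; apply: ge_sup => [|_ [v v1 <-]]; last exact: Mc.
by exists (vnorm (M *m 0)), 0; rewrite //= vnorm0.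
Qed.

Lemma vnorm_mulmx_le M v : vnorm (M *m v) <= opnorm M * vnorm v.
Proof.
have [/vnorm_eq0->|v0] := eqVneq (vnorm v) 0; first by rewrite mulmx0 vnorm0 mulr0.
have vpos : 0 < vnorm v by rewrite lt_def v0 vnorm_ge0.
have -> : M *m v = vnorm v *: (M *m ((vnorm v)^-1 *: v)).
  by rewrite -scalemxAr scalerA divff // scale1r.
rewrite vnormZ ger0_norm ?vnorm_ge0 // mulrC ler_wpM2r ?vnorm_ge0 // opnorm_ub //.
by rewrite vnormZ ger0_norm ?invr_ge0 ?vnorm_ge0 // mulVf.
Qed.

Lemma opnormD M1 M2 : opnorm (M1 + M2) <= opnorm M1 + opnorm M2.
Proof.
apply: opnorm_le => v v1; rewrite mulmxDl (le_trans (vnormD _ _)) //.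
by rewrite lerD // opnorm_ub.
Qed.

Lemma opnormM M1 M2 : opnorm (M1 *m M2) <= opnorm M1 * opnorm M2.
Proof.
apply: opnorm_le => v v1; rewrite -mulmxA (le_trans (vnorm_mulmx_le _ _)) //.
by rewrite ler_wpM2l ?opnorm_ge0 // opnorm_ub.
Qed.

Lemma opnormZ (c : R) M : opnorm (c *: M) <= `|c| * opnorm M.
Proof.
apply: opnorm_le => v v1; rewrite -scalemxAl vnormZ.
by rewrite ler_wpM2l // opnorm_ub.
Qed.

Lemma opnorm1 : opnorm (1%:M : 'M[R]_d) <= 1.
Proof. by apply: opnorm_le => v; rewrite mul1mx. Qed.

End OperatorNorm.

Section Perturbation.
Variables (R : realType) (d : nat).
Implicit Types (B E : nat -> 'M[R]_d).

Lemma opnorm_lprod_le B n : opnorm (lprod B n) <= \prod_(k < n) opnorm (B k).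
Proof.
elim: n => [|n IH]; first by rewrite big_ord0 opnorm1.
rewrite big_ord_recr /= mulrC (le_trans (opnormM _ _)) //.
by rewrite ler_wpM2l ?opnorm_ge0.
Qed.

Lemma opnorm_lprodD_sub B E (eps : R) n :
  0 <= eps <= 1 -> (forall k, opnorm (E k) <= eps) ->
  opnorm (lprod (fun k => B k + E k) n - lprod B n)
    <= n%:R * eps * \prod_(k < n) (opnorm (B k) + 1).
Proof.
move=> /andP[eps0 eps1] Eeps; elim: n => [|n IH].
  by rewrite subrr !mul0r; apply: opnorm_le => v _; rewrite mul0mx vnorm0.
rewrite big_ord_recr /=.
set P' := lprod _ n; set P := lprod B n; set Q := \prod_(k < n) _.
set a := opnorm (B n).
have a0 : 0 <= a := opnorm_ge0 _.
have Q0 : 0 <= Q by rewrite prodr_ge0 // => k _; rewrite addr_ge0 ?opnorm_ge0.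
have PQ : opnorm P <= Q.
  rewrite (le_trans (opnorm_lprod_le _ _)) // ler_prod // => k _.
  by rewrite opnorm_ge0 /= lerDl.
rewrite [X in opnorm X](_ : _ = (B n + E n) *m (P' - P) + E n *m P); last first.
  by rewrite mulmxBr (mulmxDl (B n) (E n) P) opprD addrA subrK.
have first_term : opnorm ((B n + E n) *m (P' - P)) <= (a + 1) * (n%:R * eps * Q).
  rewrite (le_trans (opnormM _ _)) // ler_pM ?opnorm_ge0 //.
  by rewrite (le_trans (opnormD _ _)) // lerD // (le_trans (Eeps n)).
have second_term : opnorm (E n *m P) <= eps * Q.
  by rewrite (le_trans (opnormM _ _)) // ler_pM ?opnorm_ge0.
rewrite (le_trans (opnormD _ _)) // (le_trans (lerD first_term second_term)) //.
have -> : n.+1%:R * eps * (Q * (a + 1))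
    = (a + 1) * (n%:R * eps * Q) + (eps * Q + eps * Q * a) by rewrite -natr1; ring.
by rewrite lerD2l lerDl !mulr_ge0.
Qed.

End Perturbation.

Lemma lerD1_expR_logplus (R : realType) (a : R) :
  0 <= a -> a + 1 <= expR (logplus a + 1).
Proof.
move=> a0; have e2 : 2 <= expR (1 : R) by rewrite (le_trans _ (expR_ge1Dx 1)).
have [a1|a1] := leP a 1.
  apply: (@le_trans _ _ (expR 1)); first lra.
  by rewrite ler_expR lerDr /logplus le_max lexx.
have lna0 : 0 <= ln a by rewrite ln_ge0 //; lra.
rewrite /logplus max_r // expRD lnK ?posrE; last lra.
have : a * 2 <= a * expR 1 by rewrite ler_wpM2l.
lra.
Qed.

Lemma prodD1_le_expR (R : realType) (a : nat -> R) n : (forall k, 0 <= a k) ->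
  \prod_(k < n) (a k + 1) <= expR (\sum_(k < n) (logplus (a k) + 1)).
Proof.
move=> a0; rewrite expR_sum ler_prod // => k _.
by rewrite addr_ge0 // lerD1_expR_logplus.
Qed.

Lemma natr_mul_expR_le1 (R : realType) (eps L : R) (N : nat) :
  0 < eps -> 1 <= L -> N%:R <= (2 * L)^-1 * - ln eps ->
  N%:R * eps * expR (L * N%:R) <= 1.
Proof.
move=> eps0 L1 hN.
set x := Num.sqrt eps.
have x0 : 0 < x by rewrite sqrtr_gt0.
have epsE : eps = x * x by rewrite -expr2 sqr_sqrtr // ltW.
have lneps : - ln eps = 2 * - ln x by rewrite epsE lnM ?posrE //; ring.
have LN : L * N%:R <= - ln x.
  have -> : L * N%:R = N%:R * L by rewrite mulrC.
  rewrite -ler_pdivlMr ?(lt_le_trans ltr01) // (le_trans hN) // lneps.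
  by rewrite invfM mulrACA mulVf ?pnatr_eq0 // mul1r mulrC.
have N_le : N%:R <= - ln x.
  by rewrite (le_trans _ LN) // ler_peMl.
have expLN : expR (L * N%:R) <= x^-1.
  by rewrite (le_trans (_ : _ <= expR (- ln x))) ?ler_expR // -lnV ?posrE // lnK ?posrE ?invr_gt0.
have lnx_lt : - ln x < x^-1 by rewrite -lnV ?posrE // ln_sublinear ?invr_gt0.
have xge0 : 0 <= x := ltW x0.
apply: (@le_trans _ _ (N%:R * x)).
  rewrite -mulrA ler_wpM2l // epsE -mulrA -[leRHS]mulr1 ler_wpM2l //.
  by rewrite -[leRHS](mulfV (lt0r_neq0 x0)) ler_wpM2l.
rewrite (le_trans (ler_wpM2r xge0 N_le)) // -[leRHS](mulVf (lt0r_neq0 x0)).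
by rewrite ler_wpM2r // ltW.
Qed.

Lemma opnorm_lprod_perturb_le1 (R : realType) (d : nat) (B D : nat -> 'M[R]_d)
    (eps L : R) :
  0 < eps < 1 -> 1 <= L -> (forall k, opnorm (D k) <= 1) ->
  let N := Num.truncn ((2 * L)^-1 * `|ln eps|) in
  \sum_(k < N) (logplus (opnorm (B k)) + 1) <= L * N%:R ->
  opnorm (lprod (fun k => B k + eps *: D k) N - lprod B N) <= 1.
Proof.
move=> eps01 L1 D1 N hsum; have /andP[eps0 eps1] := eps01.
have epsD k : opnorm (eps *: D k) <= eps.
  rewrite (le_trans (opnormZ _ _)) // ger0_norm ?ler_piMr //; exact: ltW.
have hN : N%:R <= (2 * L)^-1 * - ln eps.
  rewrite -ltr0_norm ?ln_lt0 ?eps0 // truncn_le mulr_ge0 // invr_ge0; lra.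
have prod_le : \prod_(k < N) (opnorm (B k) + 1) <= expR (L * N%:R).
  apply: le_trans (prodD1_le_expR N (fun k => opnorm_ge0 (B k))) _.
  by rewrite ler_expR.
have eps_unit : 0 <= eps <= 1 by rewrite !ltW.
apply: le_trans (opnorm_lprodD_sub B N eps_unit epsD) _.
apply: le_trans (natr_mul_expR_le1 eps0 L1 hN).
by rewrite ler_wpM2l // mulr_ge0 // ltW.
Qed.

Definition io_below (R : numDomainType) (u : nat -> R) (q : R) : Prop :=
  forall m, exists2 n, (m <= n)%N & u n < q * n%:R.

Lemma io_below_transfer (R : archiRealFieldType) (u v : nat -> R) (t : nat -> nat)
    (c q q' : R) :
  0 <= q' -> q < q' -> (forall n, (n <= (t n).+1)%N) ->
  (forall n, v (t n) <= u n + c) -> io_below u q -> io_below v q'.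
Proof.
move=> q'0 qq' t_ge vu uq m.
set K := Num.truncn ((c + q') / (q' - q)).
have [n mKn un] := uq (m + K).+1.
exists (t n); first by have := t_ge n; lia.
have gap : 0 < q' - q by rewrite subr_gt0.
have cn : c + q' < (q' - q) * n%:R.
  rewrite mulrC -ltr_pdivrMr // (lt_le_trans (truncnS_gt _)) // -/K ler_nat; lia.
have tn : n%:R <= (t n)%:R + 1 :> R by rewrite natr1 ler_nat.
have : q' * (n%:R - 1) <= q' * (t n)%:R by rewrite ler_wpM2l //; lra.
have := vu n; nra.
Qed.

Lemma sum_le_block_cover (R : realFieldType) (u g : nat -> R) (L : R) (K : nat) :
  0 <= L -> (forall j, 0 <= u j) -> (forall j, 0 <= g j) ->
  (forall p, g p = u p \/
     exists2 t, (t < K)%N & \sum_(i < t.+1) u (p + i)%N < L * t.+1%:R) ->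
  forall N, \sum_(j < N) u j <= L * (N + K)%:R + \sum_(j < N + K) g j.
Proof.
move=> L0 u0 g0 cover.
have sum_mono (h : nat -> R) p q : (forall j, 0 <= h j) -> (p <= q)%N ->
    \sum_(j < p) h j <= \sum_(j < q) h j.
  move=> h0 pq; rewrite -(subnKC pq) big_split_ord /= lerDl.
  by apply: sumr_ge0 => i _.
(* cover [0, p) greedily by blocks of length at most K *)
have greedy n : exists p, [/\ (n <= p)%N, (p <= n + K)%N &
    \sum_(j < p) u j <= L * p%:R + \sum_(j < p) g j].
  elim: n => [|n [p [np pnK up]]].
    by exists 0%N; rewrite !big_ord0 mulr0 addr0.
  have [ltnp|lepn] := ltnP n p; first by exists p; split => //; lia.
  have pn : p = n by lia.
  subst n.
  case: (cover p) => [gu|[t tK ut]].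
    exists p.+1; split; [lia|lia|].
    by rewrite !big_ord_recr /= -gu -natr1 mulrDr mulr1; lra.
  exists (p + t.+1)%N; split; [lia|lia|].
  rewrite !big_split_ord /= natrD mulrDr.
  have : 0 <= \sum_(i < t.+1) g (p + i)%N by apply: sumr_ge0.
  lra.
move=> N; have [p [Np pNK up]] := greedy N.
apply: le_trans (sum_mono _ _ _ u0 Np) _; apply: le_trans up _.
by rewrite lerD ?sum_mono // ler_wpM2l // ler_nat.
Qed.

Lemma markov_ge0 (dsp : measure_display) (T : measurableType dsp) (R : realType)
    (mu : {measure set T -> \bar R}) (h : T -> R) (c : R) :
  0 < c -> measurable_fun setT h -> (forall x, 0 <= h x) ->
  (c%:E * mu [set x | (c <= h x)%R] <= \int[mu]_x (h x)%:E)%E.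
Proof.
move=> c0 mh h0.
have := @le_integral_comp_abse _ T R mu setT measurableT (EFin \o h) c id
  (@measurable_id _ _ setT) (fun r r0 => r0) (fun x y _ _ xy => xy).
move=> /(_ ltac:(exact/measurable_EFinP) c0); rewrite setTI /=.
have -> : [set x | (c%:E <= `|(h x)%:E|)%E] = [set x | c <= h x].
  by apply/seteqP; split => x /=; rewrite ger0_norm // lee_fin.
by under eq_integral do rewrite ger0_norm //.
Qed.

Lemma measurable_sublevel (dsp : measure_display) (T : measurableType dsp)
    (R : realType) (h : T -> R) (c : R) :
  measurable_fun setT h -> measurable [set x | h x < c].
Proof.
move=> mh; have := mh measurableT _ (measurable_itv `]-oo, c[); rewrite setTI.
by congr measurable; apply/seteqP; split => x /=; rewrite in_itv.
Qed.

Lemma measurable_superlevel (dsp : measure_display) (T : measurableType dsp)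
    (R : realType) (h : T -> R) (c : R) :
  measurable_fun setT h -> measurable [set x | c <= h x].
Proof.
move=> mh; have := mh measurableT _ (measurable_itv `[c, +oo[); rewrite setTI.
by congr measurable; apply/seteqP; split => x /=; rewrite in_itv /= andbT.
Qed.

Lemma probability_setI_ge (dsp : measure_display) (T : measurableType dsp)
    (R : realType) (P : probability T R) (A B : set T) (eta : R) :
  measurable A -> measurable B -> P A = 1%E -> (P (~` B) <= eta%:E)%E ->
  ((1 - eta)%:E <= P (A `&` B))%E.
Proof.
move=> mA mB PA1 PBc.
have mAB : measurable (A `&` B) by exact: measurableI.
have PAc0 : P (~` A) = 0%E by rewrite probability_setC // PA1 subee.
have PABc : (P (~` (A `&` B)) <= eta%:E)%E.
  rewrite setCI; apply: le_trans (measureU2 P (measurableC mA) (measurableC mB)) _.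
  by change (P (~` A) + P (~` B) <= eta%:E)%E; rewrite PAc0 add0e.
have := probability_setC P (measurableC mAB); rewrite setCK => ->.
move: PABc; rewrite -[P (~` _)]fineK ?fin_num_measure ?lee_fin //; last exact: measurableC.
lra.
Qed.

Section BirkhoffSums.
Context (dsp : measure_display) (T : measurableType dsp) (R : realType)
  (P : probability T R) (s : T -> T).
Hypothesis s_mp : measure_preserving P s.
Implicit Types (h : T -> R) (n p : nat) (x : T).

Definition birkhoff_sum (h : T -> R) (n : nat) (x : T) : R :=
  \sum_(j < n) h (iter j s x).

Lemma measurable_iter j : measurable_fun setT (iter j s).
Proof.
elim: j => [|j IH] /=; first exact: measurable_id.
exact: measurableT_comp (proj1 s_mp) IH.
Qed.

Lemma measure_preimage_iter j B : measurable B -> P (iter j s @^-1` B) = P B.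
Proof.
elim: j B => [|j IH] B mB //=.
rewrite (_ : _ @^-1` B = iter j s @^-1` (s @^-1` B)) // IH ?(proj2 s_mp) //.
by rewrite -(setTI (s @^-1` B)); exact: (proj1 s_mp).
Qed.

Lemma integral_iter j (g : T -> \bar R) :
  measurable_fun setT g -> (forall x, (0 <= g x)%E) ->
  (\int[P]_x g (iter j s x) = \int[P]_x g x)%E.
Proof.
move=> mg g0.
have := ge0_integral_pushforward (measurable_iter j) P measurableT mg (fun y _ => g0 y).
rewrite preimage_setT => <-.
apply: (eq_measure_integral P); first exact: measurable_iter.
by move=> ? A mA _ /=; rewrite /pushforward measure_preimage_iter.
Qed.

Lemma measurable_birkhoff_sum h n :
  measurable_fun setT h -> measurable_fun setT (birkhoff_sum h n).
Proof.
move=> mh; elim: n => [|n IH].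
  by rewrite /birkhoff_sum; under eq_fun do rewrite big_ord0; exact: measurable_cst.
rewrite /birkhoff_sum; under eq_fun do rewrite big_ord_recr /=.
by apply: measurable_funD => //; exact: measurableT_comp mh (measurable_iter n).
Qed.

Lemma birkhoff_sum_ge0 h n x : (forall y, 0 <= h y) -> 0 <= birkhoff_sum h n x.
Proof. by move=> h0; apply: sumr_ge0. Qed.

Lemma birkhoff_sumS h n x : birkhoff_sum h n.+1 x = h x + birkhoff_sum h n (s x).
Proof.
rewrite /birkhoff_sum big_ord_recl; congr (_ + _).
by apply: eq_bigr => i _; rewrite lift0 iterSr.
Qed.

Lemma birkhoff_sum_iter h p n x :
  birkhoff_sum h n (iter p s x) = \sum_(i < n) h (iter (p + i) s x).
Proof. by apply: eq_bigr => i _; rewrite -iterD addnC. Qed.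

Lemma integral_birkhoff_sum h n (c : R) :
  measurable_fun setT h -> (forall x, 0 <= h x) ->
  (\int[P]_x (h x)%:E = c%:E)%E ->
  (\int[P]_x (birkhoff_sum h n x)%:E = (n%:R * c)%:E)%E.
Proof.
move=> mh h0 hc.
have integral_iter_h j : (\int[P]_x (h (iter j s x))%:E = c%:E)%E.
  by rewrite -hc (integral_iter j (g := EFin \o h)) //; exact/measurable_EFinP.
under eq_integral do rewrite /birkhoff_sum -sumEFin.
rewrite ge0_integral_sum //; last first.
- by move=> j x _; rewrite lee_fin.
- by move=> j; apply/measurable_EFinP; exact: measurableT_comp mh (measurable_iter j).
under eq_bigr do rewrite integral_iter_h.
by rewrite sumEFin sumr_const card_ord mulr_natl.
Qed.

Lemma measure_birkhoff_sum_ge h n (c delta : R) :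
  measurable_fun setT h -> (forall x, 0 <= h x) ->
  (\int[P]_x (h x)%:E = c%:E)%E -> 0 < delta -> (0 < n)%N ->
  (P [set x | (delta * n%:R <= birkhoff_sum h n x)%R] <= (c / delta)%:E)%E.
Proof.
move=> mh h0 hc delta0 n0.
have n0R : (0 : R) < n%:R by rewrite ltr0n.
set B := [set x | _ <= _].
have mB : measurable B by exact/measurable_superlevel/measurable_birkhoff_sum.
have : ((delta * n%:R)%:E * P B <= (n%:R * c)%:E)%E.
  rewrite -(integral_birkhoff_sum n mh h0 hc).
  apply: (markov_ge0 P); first exact: mulr_gt0.
    exact: measurable_birkhoff_sum.
  by move=> x; exact: birkhoff_sum_ge0.
rewrite -[P B]fineK ?fin_num_measure // -EFinM !lee_fin.
move=> hm; rewrite ler_pdivlMr //; nra.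
Qed.

End BirkhoffSums.

Lemma measurable_io_below (dsp : measure_display) (T : measurableType dsp)
    (R : realType) (u : nat -> T -> R) (q : R) :
  (forall n, measurable_fun setT (u n)) -> measurable [set x | io_below (u ^~ x) q].
Proof.
move=> mu; rewrite (_ : [set x | _] = \bigcap_m
    \bigcup_(n in [set n | (m <= n)%N]) [set x | u n x < q * n%:R]).
  apply: bigcapT_measurable => m; apply: bigcup_measurable => n _.
  exact: measurable_sublevel.
by apply/seteqP; split => x /= xq m; [move=> _; exact: xq | exact: xq].
Qed.

Section ErgodicUpperBound.
Context (dsp : measure_display) (T : measurableType dsp) (R : realType)
  (P : probability T R) (s : T -> T).
Hypotheses (s_mp : measure_preserving P s) (s_erg : ergodic P s).
Variables (f : T -> R) (I L : R).
Hypotheses (f_ge0 : forall x, 0 <= f x) (mf : measurable_fun setT f)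
  (intf : P.-integrable setT (EFin \o f)) (int_f : (\int[P]_x (f x)%:E)%E = I%:E)
  (I_lt_L : I < L).

Let S := birkhoff_sum s f.

Let q k := L - (L - I) / k.+1%:R.

(* the points where [liminf S n x / n < L] *)
Let low_avg := [set x | exists k, io_below (S ^~ x) (q k)].

Let I_ge0 : 0 <= I.
Proof. by rewrite -lee_fin -int_f; apply: integral_ge0 => x _; rewrite lee_fin. Qed.

Let gap_ge0 : 0 <= L - I.
Proof. by rewrite subr_ge0 ltW. Qed.

Let q_ge_I k : I <= q k.
Proof.
have : (L - I) / k.+1%:R <= L - I.
  by rewrite ler_pdivrMr ?ltr0Sn // ler_peMr // ler1n.
by rewrite /q; set z := (L - I) / _; lra.
Qed.

Let q_le_L k : q k <= L.
Proof. by rewrite /q lerBlDr lerDl divr_ge0. Qed.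

Let q_lt k : q k < q k.*2.+1.
Proof.
rewrite /q ltrD2l ltrN2 ltr_pM2l ?subr_gt0 // ltf_pV2 ?posrE ?ltr0Sn //.
by rewrite ltr_nat -addnn; lia.
Qed.

Let I_lt_q1 : I < q 1.
Proof. exact: le_lt_trans (q_ge_I 0) (q_lt 0). Qed.

Let preimage_low_avg : s @^-1` low_avg = low_avg.
Proof.
have q_ge0 k : 0 <= q k by rewrite (le_trans I_ge0).
apply/seteqP; split => x /= [k xk]; exists k.*2.+1.
- apply: (io_below_transfer (u := S ^~ (s x)) (t := fun n => n.+1) (c := f x)) xk => //.
    by move=> n; lia.
  by move=> n; rewrite /S birkhoff_sumS addrC.
- apply: (io_below_transfer (u := S ^~ x) (t := fun n => n.-1) (c := 0)) xk => //.
    by move=> n; lia.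
  case=> [|n] /=; first by rewrite /S /birkhoff_sum !big_ord0 addr0.
  by rewrite /S birkhoff_sumS addr0 lerDr.
Qed.

Let low_avg_iter p x : low_avg x -> low_avg (iter p s x).
Proof. by elim: p => [|p IH] //= /IH; rewrite -[in X in X -> _]preimage_low_avg. Qed.

Let measurable_low_avg : measurable low_avg.
Proof.
rewrite (_ : low_avg = \bigcup_k [set x | io_below (S ^~ x) (q k)]).
  apply: bigcupT_measurable => k; apply: measurable_io_below => n.
  exact: (measurable_birkhoff_sum s_mp n mf).
by apply/seteqP; split => x /= [k]; [exists k | move=> _; exists k].
Qed.

Let measure_not_low_avg_le : (P (~` low_avg) <= (I / q 1)%:E)%E.
Proof.
have q1_gt0 : 0 < q 1 := le_lt_trans I_ge0 I_lt_q1.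
pose F m := [set x | forall n, (m <= n)%N -> q 1 * n%:R <= S n x].
have mF m : measurable (F m).
  rewrite (_ : F m = \bigcap_(n in [set n | (m <= n)%N]) [set x | q 1 * n%:R <= S n x]) //.
  apply: bigcap_measurableType => n _; apply: measurable_superlevel.
  exact: (measurable_birkhoff_sum s_mp n mf).
have F_nd : nondecreasing_seq F.
  by move=> m m' mm'; apply/subsetPset => x /= Fx n m'n; apply: Fx; lia.
have not_low_sub : ~` low_avg `<=` \bigcup_m F m.
  move=> x /= xlow; have /existsNP[m xm] : ~ io_below (S ^~ x) (q 1).
    by move=> x1; apply: xlow; exists 1%N.
  by exists m => // n mn; rewrite leNgt; apply/negP => xn; apply: xm; exists n.
have PF m : (P (F m) <= (I / q 1)%:E)%E.
  apply: le_trans (measure_birkhoff_sum_ge s_mp mf f_ge0 int_f q1_gt0 (ltn0Sn m)).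
  by apply: le_measure; rewrite ?inE //; [exact: measurable_superlevel
    (measurable_birkhoff_sum s_mp _ mf) | move=> x /= Fx; exact: Fx].
have PF_cvg := nondecreasing_cvg_mu (mu := P) mF (bigcupT_measurable F mF) F_nd.
apply: le_trans (le_measure _ _ _ not_low_sub) _; rewrite ?inE.
- exact: measurableC.
- exact: bigcupT_measurable.
change (P (\bigcup_m F m) <= (I / q 1)%:E)%E.
rewrite -(cvg_lim _ PF_cvg) //; apply: lime_le; first by apply/cvg_ex; eexists; exact: PF_cvg.
exact: nearW.
Qed.

Let measure_low_avg : P low_avg = 1%E.
Proof.
have [P0|//] := s_erg measurable_low_avg preimage_low_avg.
have : (1 <= (I / q 1)%:E)%E.
  rewrite (le_trans _ measure_not_low_avg_le) //.
  by rewrite probability_setC // P0 sube0.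
rewrite lee_fin ler_pdivlMr ?mul1r ?(le_lt_trans I_ge0 I_lt_q1) //.
by rewrite leNgt I_lt_q1.
Qed.

Let no_good_time K :=
  [set x | low_avg x /\ forall t, (t < K)%N -> L * t.+1%:R <= S t.+1 x].

Let tail K x := \1_(no_good_time K) x * f x.

Let measurable_tail K : measurable_fun setT (tail K).
Proof.
apply: measurable_funM => //; apply: measurable_indic.
rewrite (_ : no_good_time K = low_avg `&`
    \bigcap_(t in [set t | (t < K)%N]) [set x | L * t.+1%:R <= S t.+1 x]) //.
apply: measurableI => //; apply: bigcap_measurableType => t _.
exact/measurable_superlevel/(measurable_birkhoff_sum s_mp _ mf).
Qed.

Let tail_ge0 K x : 0 <= tail K x.
Proof. by rewrite /tail indicE mulr_ge0. Qed.

Let tail_le K x : tail K x <= f x.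
Proof. by rewrite /tail indicE; case: (x \in _); rewrite ?mul1r ?mul0r. Qed.

Let no_good_time_eventually_false x :
  exists K, forall K', (K <= K')%N -> ~ no_good_time K' x.
Proof.
have [[k xk]|xlow] := pselect (low_avg x); last by exists 0%N => K' _ [].
have [[|t] _ xt] := xk 0%N.
  by move: xt; rewrite /S /birkhoff_sum big_ord0 mulr0 ltxx.
exists t.+1 => K' tK' [_ xK']; have := xK' t tK'.
have : q k * t.+1%:R <= L * t.+1%:R by rewrite ler_wpM2r ?q_le_L.
lra.
Qed.

Let integral_tail_small eta : 0 < eta ->
  exists K, (\int[P]_x (tail K x)%:E <= eta%:E)%E.
Proof.
move=> eta0.
have tail_cvg0 x : [set: T] x -> (fun K => (tail K x)%:E) K @[K --> \oo] --> 0%E.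
  move=> _; have [K0 K0x] := no_good_time_eventually_false x; apply: cvg_near_cst.
  by exists K0 => // K /K0x xK /=; rewrite /tail indicE memNset ?mul0r.
have tail_dom K x : [set: T] x -> (`|(tail K x)%:E| <= (EFin \o f) x)%E.
  by move=> _ /=; rewrite lee_fin ger0_norm.
have := @dominated_cvg _ T R P setT measurableT (fun K x => (tail K x)%:E) (cst 0%E)
  (EFin \o f) (fun K => (measurable_EFinP _ _).2 (measurable_tail K)) tail_cvg0
  (fun x _ => isT) intf tail_dom.
rewrite integral0 => /fine_cvgP[[K1 _ fin] /(cvgr_lt 0)/(_ _ eta0)[K2 _ small]].
exists (maxn K1 K2); have /= fin1 := fin _ (leq_maxl K1 K2).
by rewrite -(fineK fin1) lee_fin ltW // (small (maxn K1 K2)) //= leq_maxr.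
Qed.

Let birkhoff_sum_le_tail K N x : low_avg x ->
  S N x <= L * (N + K)%:R + birkhoff_sum s (tail K) (N + K) x.
Proof.
move=> xlow.
apply: (sum_le_block_cover (u := fun j => f (iter j s x)) (g := fun j => tail K (iter j s x))) => //.
  exact: le_trans I_ge0 (ltW I_lt_L).
move=> p; have [ng|good] := pselect (no_good_time K (iter p s x)).
  by left; rewrite /tail indicE mem_set // mul1r.
right; have /existsNP[t /not_implyP[tK xt]] :
    ~ forall t, (t < K)%N -> L * t.+1%:R <= S t.+1 (iter p s x).
  by move=> xK; apply: good; split => //; exact: low_avg_iter.
by exists t => //; rewrite ltNge; apply/negP; rewrite -(birkhoff_sum_iter s).
Qed.

Lemma birkhoff_sum_le_whp_gap L' : L < L' -> forall eta, 0 < eta ->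
  exists N0, forall N, (N0 <= N)%N ->
  exists G, [/\ measurable G, ((1 - eta)%:E <= P G)%E &
    forall x, G x -> birkhoff_sum s f N x <= L' * N%:R].
Proof.
move=> LL' eta eta0; set delta := (L' - L) / 2.
have delta0 : 0 < delta by rewrite divr_gt0 // subr_gt0.
have [K tailK] := integral_tail_small (mulr_gt0 delta0 eta0).
exists (Num.truncn ((L + delta) * K%:R / delta)).+1 => N N0N.
set M := (N + K)%N; set E := birkhoff_sum s (tail K) M.
have M0 : (0 < M)%N by rewrite /M; lia.
have mE : measurable_fun setT E := measurable_birkhoff_sum s_mp M (measurable_tail K).
exists (low_avg `&` [set x | E x < delta * M%:R]); split.
- exact/measurableI/measurable_sublevel.
- apply: probability_setI_ge => //; first exact: measurable_sublevel.
  have int_tail : (\int[P]_x (tail K x)%:E)%E = (fine (\int[P]_x (tail K x)%:E))%:E.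
    rewrite fineK // ge0_fin_numE ?(le_lt_trans tailK) ?ltey //.
    by apply: integral_ge0 => x _; rewrite lee_fin.
  rewrite (_ : ~` _ = [set x | delta * M%:R <= E x]); last first.
    by apply/seteqP; split => x /=; rewrite leNgt => /negP.
  apply: le_trans (measure_birkhoff_sum_ge s_mp (measurable_tail K) (tail_ge0 K) int_tail delta0 M0) _.
  by rewrite lee_fin ler_pdivrMr // mulrC -lee_fin -int_tail.
move=> x [xlow xE]; apply: le_trans (birkhoff_sum_le_tail K N xlow) _.
have KN : (L + delta) * K%:R < delta * N%:R.
  have := truncnS_gt ((L + delta) * K%:R / delta); rewrite ltr_pdivrMr // => KT.
  by rewrite (lt_le_trans KT) // mulrC ler_wpM2l ?ler_nat // ltW.
have L'E : L' = L + delta + delta by rewrite /delta -addrA -splitr; ring.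
move: xE; rewrite /= -/E /M natrD L'E; nra.
Qed.

End ErgodicUpperBound.

Lemma birkhoff_sum_le_whp (dsp : measure_display) (T : measurableType dsp)
    (R : realType) (P : probability T R) (s : T -> T) (f : T -> R) (I L : R) :
  measure_preserving P s -> ergodic P s ->
  (forall x, 0 <= f x) -> measurable_fun setT f ->
  P.-integrable setT (EFin \o f) -> (\int[P]_x (f x)%:E)%E = I%:E -> I < L ->
  forall eta, 0 < eta -> exists N0, forall N, (N0 <= N)%N ->
  exists G, [/\ measurable G, ((1 - eta)%:E <= P G)%E &
    forall x, G x -> birkhoff_sum s f N x <= L * N%:R].
Proof.
move=> s_mp s_erg f_ge0 mf intf int_f IL.
have mid : I < (I + L) / 2 < L by rewrite !ltr_pdivrMr ?ltr_pdivlMr //; lra.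
have /andP[I_mid mid_L] := mid.
by move=> eta; exact: (birkhoff_sum_le_whp_gap s_mp s_erg f_ge0 mf intf int_f I_mid mid_L).
Qed.

Lemma leq_truncn_mul_abs_ln (R : realType) (c eps : R) (n : nat) :
  0 < c -> 0 < eps < expR (- (n%:R / c)) -> (n <= Num.truncn (c * `|ln eps|))%N.
Proof.
move=> c0 /andP[eps0 eps_lt].
have lneps : ln eps < - (n%:R / c).
  by rewrite -[X in _ < X]expRK ltr_ln ?posrE ?expR_gt0.
rewrite truncn_ge_nat; last by rewrite mulr_ge0 // ltW.
rewrite mulrC -ler_pdivrMr //.
by rewrite -normrN (le_trans _ (ler_norm _)) // lerNr ltW.
Qed.

Theorem lemma2p3 (R : realType) (dsp : measure_display) (Omega : measurableType dsp)
  (P : probability Omega R) (sigma : Omega -> Omega) (d : nat)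
  (A : Omega -> 'M[R]_d) :
  measure_preserving P sigma ->
  ergodic P sigma ->
  (forall i j, measurable_fun setT (fun w => A w i j)) ->
  P.-integrable setT (fun w => (logplus (opnorm (A w)))%:E) ->
  exists C : R, 0 < C /\
    forall eta0 : R, 0 < eta0 ->
    exists eps0 : R, 0 < eps0 /\
      forall eps : R, 0 < eps < eps0 ->
      exists G : set Omega, measurable G /\ ((1 - eta0)%:E <= P G)%E /\
        forall w, G w ->
        forall Delta : int -> 'M[R]_d, (forall n, opnorm (Delta n) <= 1) ->
          let N := Num.truncn (C * `|ln eps|) in
          opnorm (lprod (fun k => A (iter k sigma w) + eps *: Delta k%:Z) N
                  - lprod (fun k => A (iter k sigma w)) N) <= 1.
Proof.
(* Measurability of the entries of [A] is not used: the integrability hypothesis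
   already makes [logplus \o opnorm \o A] measurable, and only that function enters. *)
move=> s_mp s_erg _ int_logA.
pose f w := logplus (opnorm (A w)) + 1.
have f_ge0 w : 0 <= f w by rewrite addr_ge0 // le_max lexx.
have mf : measurable_fun setT f.
  by apply: measurable_funD => //; apply/measurable_EFinP; case/integrableP: int_logA.
have intf : P.-integrable setT (EFin \o f).
  rewrite (_ : EFin \o f = (fun w => (logplus (opnorm (A w)))%:E) \+ cst 1%:E) //.
  by apply: integrableD => //; exact: finite_measure_integrable_cst.
pose I := fine (\int[P]_w (f w)%:E).
have int_f : (\int[P]_w (f w)%:E)%E = I%:E by rewrite fineK // integrable_fin_num.
pose L := I + 1.
have L1 : 1 <= L.
  by rewrite lerDr -lee_fin -int_f integral_ge0 // => w _; rewrite lee_fin.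
have C0 : 0 < (2 * L)^-1 by rewrite invr_gt0; lra.
exists (2 * L)^-1; split => // eta eta0.
have [N0 whp] := birkhoff_sum_le_whp s_mp s_erg f_ge0 mf intf int_f (ltr_pwDr ltr01 (lexx I) : I < L) eta0.
exists (expR (- (N0%:R / (2 * L)^-1))); split => [|eps eps_range]; first exact: expR_gt0.
have /andP[eps0 eps_lt] := eps_range.
have eps1 : eps < 1.
  by rewrite (lt_le_trans eps_lt) // expR_le1 oppr_le0 divr_ge0 // ltW.
have [G [mG PG GN]] := whp _ (leq_truncn_mul_abs_ln C0 eps_range).
exists G; do 2 split => //; move=> w Gw Delta Delta1.
apply: (opnorm_lprod_perturb_le1 (B := fun k => A (iter k sigma w))
  (D := fun k => Delta k%:Z)) => //; first by rewrite eps0.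
exact: GN.
Qed.
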